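(* Let $F$ be an arbitrary formal group law over $R$. For every $w\in W$ and every reduced word $I_w=(i_1,\dots,i_l)$ of $w$ we have in $Q_W$ $$\mathrm{ev}(\mathcal R^X_{I_w})=\delta_w,\qquad \mathrm{ev}(\mathcal R^Y_{I_w})=\theta_{I_w}\,\delta_w,$$ where $\theta_{I_w}:=\prod_{k=1}^{l}\theta(\beta_k)$ and $\theta(\lambda):=-\frac{x_{-\lambda}}{x_\lambda}$. Moreover $\theta_{I_w}$ depends only on $w$ and not on the choice of the reduced word $I_w$.
   Context: Let $R$ be a commutative ring and $F(x,y)\in R[[x,y]]$ a one-dimensional commutative formal group law over $R$. Let $\Phi$ be a finite (crystallographic, reduced) root system with weight lattice $\Lambda$, positive roots $\Phi^+$, negative roots $\Phi^-=-\Phi^+$, simple roots $\alpha_1,\dots,\alpha_n$, simple coroots $\alpha_i^\vee$, simple reflections $s_1,\dots,s_n$, Weyl group $W$ with length function $\ell$, Bruhat order $\le$ and longest element $w_\circ$; $m_{ij}$ denotes the order of $s_is_j$. The formal group algebra is $S=R[[y_\lambda]]_{\lambda\in\Lambda}/(y_0,\;y_{\lambda+\nu}-F(y_\lambda,y_\nu))$, on which $W$ acts by $w(y_\lambda)=y_{w\lambda}$. Whenever only one copy of $S$ is involved its generators are also written $x_\lambda:=y_\lambda$. Let $Q$ be the localization of $S$ at all $x_\alpha$, $\alpha\in\Phi$, and let $Q_W=Q\otimes_R R[W]$ be the twisted group algebra, a free left $Q$-module with basis $\{\delta_w\}_{w\in W}$ and multiplication $q\delta_w\cdot q'\delta_{w'}=q\,w(q')\,\delta_{ww'}$.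 Write $\delta_i=\delta_{s_i}$ and $x_{\pm i}=x_{\pm\alpha_i}$, and define the Demazure and push-pull elements $X_i=\frac{1}{x_i}(\delta_i-1)$ and $Y_i=\frac{1}{x_{-i}}+\frac{1}{x_i}\delta_i$ of $Q_W$. For a sequence $I=(i_1,\dots,i_l)$ set $X_I=X_{i_1}\cdots X_{i_l}$ and $Y_I=Y_{i_1}\cdots Y_{i_l}$. Let $Q_W[[\Lambda]]_F:=S\otimes_R Q_W$, where the generators of the left factor $S$ are written $y_\lambda$ and commute with all of $Q_W$ (whose coefficients are written in the variables $x_\lambda$); it is a left module over $S\otimes_R Q$. For $i\in\{1,\dots,n\}$ and $\lambda\in\Lambda$ set $h_i^Y(\lambda)=1-y_\lambda Y_i$ and $h_i^X(\lambda)=1+y_{-\lambda}X_i$. For $w\in W$ and a reduced word $I_w=(i_1,\dots,i_l)$ of $w$ (so $w=s_{i_1}\cdots s_{i_l}$, $l=\ell(w)$) let $\beta_k=s_{i_1}\cdots s_{i_{k-1}}\alpha_{i_k}$, $k=1,\dots,l$ (these are the elements of $\Phi^+\cap w\Phi^-$), and define the formal root polynomials $\mathcal R^Y_{I_w}=h^Y_{i_1}(\beta_1)h^Y_{i_2}(\beta_2)\cdots h^Y_{i_l}(\beta_l)$ and $\mathcal R^X_{I_w}=h^X_{i_1}(\beta_1)\cdots h^X_{i_l}(\beta_l)$ (products in this order). The evaluation map $\mathrm{ev}$ is the ring homomorphism $S\otimes_R Q\to Q$ with $y_\lambda\otimes 1\mapsto x_{-\lambda}$ and identity on $Q$, extended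 to the homomorphism of left $S\otimes_R Q$-modules $\mathrm{ev}:Q_W[[\Lambda]]_F\to Q_W$ (which fixes each element of $Q_W$ and sends $y_\lambda$ to $x_{-\lambda}$). *)

From HB Require Import structures.
From mathcomp Require Import all_boot all_order all_algebra.
Set Implicit Arguments. Unset Strict Implicit. Unset Printing Implicit Defensive.
Import Order.TTheory GRing.Theory Num.Theory.
Local Open Scope ring_scope.

(* Weights are column vectors 'cV[int]_n in the basis of fundamental  *)
(* weights; A i j = <alpha_i, alpha_j^vee>, so alpha_i = \col_j A i j *)
(* and s_i(lam) = lam - <lam, alpha_i^vee> alpha_i = lam - lam_i a_i. *)

Definition finite_cartan (n : nat) (A : 'M[int]_n) : Prop :=
  [/\ (forall i, A i i = 2),
      (forall i j, i != j -> A i j <= 0),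
      (forall i j, (A i j == 0) = (A j i == 0)) &
      exists d : 'I_n -> int,
        [/\ (forall i, 0 < d i),
            (forall i j, A i j * d j = A j i * d i) &
            (forall v : 'I_n -> rat, (exists i, v i != 0) ->
               0 < \sum_i \sum_j v i * (A i j * d j)%:~R * v j)]].

Definition alpha (n : nat) (A : 'M[int]_n) (i : 'I_n) : 'cV[int]_n :=
  \col_j A i j.

Definition sref (n : nat) (A : 'M[int]_n) (i : 'I_n) : 'M[int]_n :=
  \matrix_(j, k) ((j == k)%:R - A i j * (k == i)%:R).

Definition word_mx (n : nat) (A : 'M[int]_n) (I : seq 'I_n) : 'M[int]_n :=
  foldr (fun i M => sref A i *m M) 1%:M I.

Definition inW (n : nat) (A : 'M[int]_n) (w : 'M[int]_n) : Prop :=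
  exists I : seq 'I_n, w = word_mx A I.

Definition reduced_word (n : nat) (A : 'M[int]_n) (w : 'M[int]_n)
    (I : seq 'I_n) : Prop :=
  word_mx A I = w /\ forall J : seq 'I_n, word_mx A J = w -> (size I <= size J)%N.

(* beta_k = s_{i_1} ... s_{i_{k-1}} alpha_{i_k}, k = 1..l *)
Fixpoint betas (n : nat) (A : 'M[int]_n) (I : seq 'I_n) : seq 'cV[int]_n :=
  match I with
  | [::] => [::]
  | i :: I' => alpha A i :: map (fun b => sref A i *m b) (betas A I')
  end.

Section Algebras.
Variables (Q : comUnitRingType) (n : nat) (A : 'M[int]_n).
Variable act : 'M[int]_n -> {rmorphism Q -> Q}.
Variable x : 'cV[int]_n -> Q.

(* ---- twisted group algebra Q_W: finite formal sums  sum q delta_w  ---- *)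
Definition QW := seq (Q * 'M[int]_n).
Definition qw_coef (a : QW) (w : 'M[int]_n) : Q := \sum_(t <- a | t.2 == w) t.1.
Definition qw_eq (a b : QW) : Prop := forall w, qw_coef a w = qw_coef b w.
Definition qw_delta (w : 'M[int]_n) : QW := [:: (1, w)].
Definition qw_scale (q : Q) (a : QW) : QW := [seq (q * t.1, t.2) | t <- a].
Definition qw_mul (a b : QW) : QW :=
  [seq (t.1 * act t.2 u.1, t.2 *m u.2) | t <- a, u <- b].

Definition Xop (i : 'I_n) : QW :=
  [:: ((x (alpha A i))^-1, sref A i); (- (x (alpha A i))^-1, 1%:M)].
Definition Yop (i : 'I_n) : QW :=
  [:: ((x (- alpha A i))^-1, 1%:M); ((x (alpha A i))^-1, sref A i)].

(* Elements are represented by finite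
   sums of terms  y_{mu_1}...y_{mu_r} (x) q delta_w  (the y's central); the
   relations of S are not imposed -- ev below factors through them. ---- *)
Definition QWL := seq (seq 'cV[int]_n * (Q * 'M[int]_n)).
Definition qwl_one : QWL := [:: ([::], (1, 1%:M))].
Definition qwl_mul (a b : QWL) : QWL :=
  [seq (t.1 ++ u.1, (t.2.1 * act t.2.2 u.2.1, t.2.2 *m u.2.2)) | t <- a, u <- b].
Definition qwl_y (lam : 'cV[int]_n) (a : QW) : QWL := [seq ([:: lam], t) | t <- a].

Definition hY (i : 'I_n) (lam : 'cV[int]_n) : QWL :=
  qwl_one ++ qwl_y lam (qw_scale (-1) (Yop i)).
Definition hX (i : 'I_n) (lam : 'cV[int]_n) : QWL :=
  qwl_one ++ qwl_y (- lam) (Xop i).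

Definition rootpolyY (I : seq 'I_n) : QWL :=
  foldr (fun p acc => qwl_mul (hY p.1 p.2) acc) qwl_one (zip I (betas A I)).
Definition rootpolyX (I : seq 'I_n) : QWL :=
  foldr (fun p acc => qwl_mul (hX p.1 p.2) acc) qwl_one (zip I (betas A I)).

Definition ev (a : QWL) : QW :=
  [seq ((\prod_(mu <- t.1) x (- mu)) * t.2.1, t.2.2) | t <- a].

Definition theta (lam : 'cV[int]_n) : Q := - (x (- lam) / x lam).
Definition thetaI (I : seq 'I_n) : Q := \prod_(b <- betas A I) theta b.

End Algebras.

From HB Require Import structures.
From mathcomp Require Import all_boot all_order all_algebra.
From mathcomp Require Import ring zify.
From Stdlib Require Import Classical.
Import Order.TTheory GRing.Theory Num.Theory.
Set Implicit Arguments. Unset Strict Implicit. Unset Printing Implicit Defensive.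
Local Open Scope ring_scope.

(* Since the variables [y] are central, [ev] of a root polynomial can be computed factor
   by factor, moving [delta_(s_i_1 ... s_i_(k-1))] to the left: this turns [y_(-beta_k)]
   into [x_(alpha_i_k)], and [1 + x_(alpha_i) X_i = delta_i] while
   [1 - x_(-alpha_i) Y_i = theta(alpha_i) delta_i], so both products telescope.
   For the last claim, [beta_1, ..., beta_l] are the distinct elements of the inversion
   set of [w], which does not depend on the reduced word.  Starting from a Cartan matrix
   this rests on every root being positive or negative, i.e. on Deodhar's lemma
   ([ws > w] implies [w alpha_s > 0]), whose proof reduces to rank 2, where the finitely
   many Cartan matrices of finite type are checked by computation. *)

Section Reflections.
Variables (n : nat) (A : 'M[int]_n).

Lemma alphaE i : alpha A i = A^T *m delta_mx i 0.
Proof. by rewrite -colE; apply/matrixP => j k; rewrite !mxE. Qed.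

Lemma sref_mulE i m (M : 'M[int]_(n, m)) j k :
  (sref A i *m M) j k = M j k - A i j * M i k.
Proof.
have -> : sref A i = 1%:M - alpha A i *m delta_mx 0 i.
  by apply/matrixP => j' k'; rewrite !mxE big_ord1 !mxE.
by rewrite mulmxBl mul1mx -mulmxA -rowE !mxE big_ord1 !mxE.
Qed.

Lemma sref_vec i (mu : 'cV[int]_n) : sref A i *m mu = mu - mu i 0 *: alpha A i.
Proof. by apply/matrixP => j k; rewrite sref_mulE !mxE (ord1 k) mulrC. Qed.

Lemma word_mx_cat K J : word_mx A (K ++ J) = word_mx A K *m word_mx A J.
Proof. by elim: K => [|i K IH] /=; rewrite ?mul1mx // IH mulmxA. Qed.

Lemma word_mx_rcons K i : word_mx A (rcons K i) = word_mx A K *m sref A i.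
Proof. by rewrite -cats1 word_mx_cat /= mulmx1. Qed.

Lemma inW1 : inW A 1%:M. Proof. by exists [::]. Qed.

Lemma inW_sref i : inW A (sref A i). Proof. by exists [:: i]; rewrite /= mulmx1. Qed.

Lemma inW_mul u v : inW A u -> inW A v -> inW A (u *m v).
Proof. by move=> [K ->] [J ->]; exists (K ++ J); rewrite word_mx_cat. Qed.

Hypothesis A_diag : forall i, A i i = 2.

Lemma sref_alpha i : sref A i *m alpha A i = - alpha A i.
Proof. by rewrite sref_vec mxE A_diag scaler_nat mulr2n opprD addNKr. Qed.

Lemma srefK i : sref A i *m sref A i = 1%:M.
Proof.
apply/matrixP => j k; rewrite sref_mulE !mxE A_diag.
by case: (eqVneq k i) => [->|_] /=; ring.
Qed.

Lemma det_sref i : \det (sref A i) = -1.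
Proof.
rewrite (expand_det_row _ i) (bigD1 i) //= big1 ?addr0; last first.
  by move=> j nji; rewrite !mxE A_diag eq_sym (negbTE nji) /=; ring.
rewrite /cofactor; have -> : row' i (col' i (sref A i)) = 1%:M.
  apply/matrixP => a b; rewrite !mxE (inj_eq lift_inj).
  by rewrite [lift i b == i]eq_sym (negbTE (neq_lift i b)) mulr0 subr0.
rewrite det1 !mxE A_diag eqxx addnn -signr_odd odd_double.
by rewrite /= expr0 !mulr1 mulr2n opprD addNKr.
Qed.

Lemma det_word_mx K : \det (word_mx A K) = (-1) ^+ size K.
Proof. by elim: K => [|i K IH] /=; rewrite ?det1 // det_mulmx IH det_sref exprS. Qed.

Lemma word_mx_odd_size K J : word_mx A K = word_mx A J -> odd (size K) = odd (size J).
Proof.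
move=> E; have := det_word_mx K; rewrite E det_word_mx -signr_odd -[RHS]signr_odd.
by case: odd; case: odd => // /eqP; rewrite -subr_eq0 ?opprK.
Qed.

Lemma word_mx_revK K : word_mx A (rev K) *m word_mx A K = 1%:M.
Proof.
elim: K => [|i K IH]; first by rewrite /= mulmx1.
by rewrite rev_cons word_mx_rcons /= -mulmxA (mulmxA (sref A i)) srefK mul1mx.
Qed.

Lemma word_mxK K : word_mx A K *m word_mx A (rev K) = 1%:M.
Proof. by have := word_mx_revK (rev K); rewrite revK. Qed.

Lemma word_mx_rev K J : word_mx A K = word_mx A J -> word_mx A (rev K) = word_mx A (rev J).
Proof.
by move=> E; rewrite -[LHS]mulmx1 -(word_mxK J) mulmxA -E word_mx_revK mul1mx.
Qed.

End Reflections.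

Lemma sum_pair (I : finType) (R : nmodType) (t t' : I) (f : I -> R) : t != t' ->
  (forall i, i != t -> i != t' -> f i = 0) -> \sum_i f i = f t + f t'.
Proof.
move=> ntt' f0; rewrite (bigD1 t) //= (bigD1 t') 1?eq_sym //=.
by rewrite big1 ?addr0 // => i /andP[it' it]; apply: f0.
Qed.

Section CartanForm.
Variables (n : nat) (A : 'M[int]_n).
Hypothesis A_cartan : finite_cartan A.

Lemma cartan_diag i : A i i = 2. Proof. by case: A_cartan. Qed.

Lemma cartan_form_pos : exists d : 'I_n -> int,
  [/\ forall i, 0 < d i, forall i j, A i j * d j = A j i * d i &
      forall v : 'I_n -> int, (exists i, v i != 0) ->
        0 < \sum_i \sum_j v i * (A i j * d j) * v j].
Proof.
case: A_cartan => _ _ _ [d [dpos dsym pd]]; exists d; split => // v [i vi].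
have /pd : exists i, ((v i)%:~R : rat) != 0 by exists i; rewrite intr_eq0.
rewrite -(@ltr0z rat) rmorph_sum; congr (0 < _); apply: eq_bigr => i' _.
by rewrite rmorph_sum; apply: eq_bigr => j _; rewrite !rmorphM.
Qed.

Lemma simple_roots_free (c : 'cV[int]_n) : A^T *m c = 0 -> c = 0.
Proof.
move=> Ac0; apply/eqP/negPn/negP => /cV0Pn nz.
have [d [_ _ pd]] := cartan_form_pos.
have := pd (fun i => c i 0) nz; rewrite exchange_big big1 ?ltxx // => j _.
have Acj : \sum_i A i j * c i 0 = 0.
  by move/matrixP: Ac0 => /(_ j 0); rewrite !mxE; under eq_bigr do rewrite mxE.
transitivity ((\sum_i A i j * c i 0) * (d j * c j 0)); last by rewrite Acj mul0r.
by rewrite mulr_suml; apply: eq_bigr => i _; ring.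
Qed.

(* The form evaluated at [2 d_t alpha_t' - A_tt' d_t' alpha_t] is
   [2 d_t^2 d_t' (4 - A_t't A_tt')]. *)
Lemma cartan_pair_lt4 (t t' : 'I_n) : t != t' -> A t' t * A t t' < 4.
Proof.
move=> ntt'; have [d [dpos dsym pd]] := cartan_form_pos.
pose v i : int := if i == t then - (A t t' * d t') else if i == t' then 2 * d t else 0.
have v0 i : i != t -> i != t' -> v i = 0 by rewrite /v => /negbTE-> /negbTE->.
have t't : (t' == t) = false by rewrite eq_sym (negbTE ntt').
have : exists i, v i != 0 by exists t'; rewrite /v t't eqxx; have := dpos t; lia.
move/pd; rewrite (sum_pair ntt'); last first.
  by move=> i it it'; rewrite big1 // => j _; rewrite v0 // !mul0r.
rewrite !(@sum_pair _ _ t t') //; try by move=> i it it'; rewrite (v0 i) ?mulr0.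
rewrite /v !eqxx t't !cartan_diag.
have := dsym t t'; have := dpos t; have := dpos t'.
set p := A t' t; set q := A t t'; set a := d t; set b := d t' => b0 a0 dsym_tt'.
set F := (X in 0 < X -> _).
have -> : F = (2 * a * a * b) * (4 - p * q) by rewrite /F; ring.
by rewrite pmulr_rgt0 ?subr_gt0 // !mulr_gt0.
Qed.

End CartanForm.

Lemma classic_ex_min (P : nat -> Prop) m : P m ->
  exists m0, P m0 /\ forall k, (k < m0)%N -> ~ P k.
Proof.
elim/ltn_ind: m => m IH Pm.
case: (classic (exists2 k, (k < m)%N & P k)) => [[k lt_k_m Pk]|no_k]; first exact: IH Pk.
by exists m; split=> // k lt_k_m Pk; apply: no_k; exists k.
Qed.

Section ReducedWords.
Variables (n : nat) (A : 'M[int]_n).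

(* Reduced among the words with letters in [P]; [P = predT] gives reduced words of W,
   [P = pred2 t t'] reduced words of the dihedral subgroup generated by [s_t], [s_t']. *)
Definition reduced_in (P : pred 'I_n) (U : seq 'I_n) :=
  all P U /\ forall V, all P V -> word_mx A V = word_mx A U -> (size U <= size V)%N.

Definition reduced (U : seq 'I_n) := reduced_in predT U.

Lemma reducedP U :
  reduced U <-> forall V, word_mx A V = word_mx A U -> (size U <= size V)%N.
Proof.
rewrite /reduced /reduced_in all_predT.
by split=> [[_ minU] V /minU|minU]; [apply; rewrite all_predT | split=> // V _ /minU].
Qed.

Lemma reduced_word_reduced w U : reduced_word A w U -> reduced U.
Proof. by case=> <- minU; apply/reducedP. Qed.

Lemma reduced_in_catl P U1 U2 : reduced_in P (U1 ++ U2) -> reduced_in P U1.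
Proof.
rewrite /reduced_in all_cat => -[/andP[PU1 PU2] minU]; split=> // V PV E.
have := minU (V ++ U2); rewrite all_cat PV PU2 !word_mx_cat E !size_cat.
by move=> /(_ isT erefl); rewrite leq_add2r.
Qed.

Lemma reduced_in_catr P U1 U2 : reduced_in P (U1 ++ U2) -> reduced_in P U2.
Proof.
rewrite /reduced_in all_cat => -[/andP[PU1 PU2] minU]; split=> // V PV E.
have := minU (U1 ++ V); rewrite all_cat PV PU1 !word_mx_cat E !size_cat.
by move=> /(_ isT erefl); rewrite leq_add2l.
Qed.

Hypothesis A_diag : forall i, A i i = 2.

Lemma reduced_in_letter (P : pred 'I_n) i : P i -> reduced_in P [:: i].
Proof.
move=> Pi; split=> [|[|j V] _] //=; rewrite ?Pi // mulmx1 => s_i1.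
have := sref_alpha A_diag i; rewrite -s_i1 mul1mx => /matrixP/(_ i 0)/eqP.
by rewrite !mxE A_diag.
Qed.

Lemma reduced_in_rev P U : reduced_in P U -> reduced_in P (rev U).
Proof.
rewrite /reduced_in all_rev => -[PU minU]; split=> // V PV E.
rewrite size_rev -(size_rev V) minU ?all_rev //.
by have := word_mx_rev A_diag E; rewrite revK.
Qed.

Lemma reduced_in_path P u U : reduced_in P (u :: U) -> path (fun a b => a != b) u U.
Proof.
elim: U u => [|v U IH] u //= redU; apply/andP; split; last first.
  by apply: IH; apply: (@reduced_in_catr _ [:: u]).
apply/eqP => uv; case: redU => /= /and3P[_ _ PU] /(_ U PU).
by rewrite /= -uv mulmxA srefK // mul1mx => /(_ erefl); rewrite ltnNge leqnSn.
Qed.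

Lemma exists_reduced K :
  exists V, [/\ reduced V, word_mx A V = word_mx A K & (size V <= size K)%N].
Proof.
pose P m := exists V, size V = m /\ word_mx A V = word_mx A K.
have [_ [[V [<- EV]] minV]] := @classic_ex_min P (size K) (ex_intro _ K (conj erefl erefl)).
exists V; split=> //; last by rewrite leqNgt; apply/negP => /minV; apply; exists K.
apply/reducedP => J EJ; rewrite leqNgt; apply/negP => /minV; apply.
by exists J; rewrite EJ.
Qed.

(* Parity of lengths ([det (word_mx A K) = (-1)^(size K)]) rules out [l(ws) = l(w)]. *)
Lemma not_reduced_rcons V t : ~ reduced (rcons V t) ->
  exists V', [/\ reduced V', word_mx A V' *m sref A t = word_mx A V & (size V' < size V)%N].
Proof.
move=> nred; have [J [EJ lt_J]] : exists J, word_mx A J = word_mx A (rcons V t)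
    /\ (size J < size (rcons V t))%N.
  apply: NNPP => noJ; apply: nred; apply/reducedP => J EJ.
  by rewrite leqNgt; apply/negP => lt_J; apply: noJ; exists J.
have [V' [redV' EV' le_V'J]] := exists_reduced J.
exists V'; split=> //; first by rewrite EV' EJ word_mx_rcons -mulmxA srefK // mulmx1.
have := word_mx_odd_size A_diag EJ; rewrite size_rcons /= in lt_J * => odd_J.
move: lt_J; rewrite ltnS leq_eqVlt => /orP[/eqP eqJ|lt_J].
  by rewrite eqJ in odd_J; case: odd odd_J.
exact: leq_ltn_trans le_V'J lt_J.
Qed.

End ReducedWords.

(* A state [(v_t, v_t', P, Q)] stands for the vector [v = lam + P alpha_t + Q alpha_t']
   with coordinates [v_t], [v_t'] at [t], [t']; the letter [true] acts as [s_t], [false]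
   as [s_t'], and [p = A t' t], [q = A t t']. *)
Definition rank2_step (p q : int) (b : bool) (st : int * int * int * int) :=
  let: (vt, vt', P, Q) := st in
  if b then (- vt, vt' - vt * q, P - vt, Q) else (vt - vt' * p, - vt', P, Q - vt').

Definition rank2_coeffs (p q : int) (B : seq bool) (vt vt' : int) : int * int :=
  let: (_, _, P, Q) := foldr (rank2_step p q) (vt, vt', 0, 0) B in (P, Q).

Fixpoint alt_word (b : bool) (k : nat) : seq bool :=
  if k is k'.+1 then b :: alt_word (~~ b) k' else [::].

Definition coxeter_m (p q : int) : nat :=
  if p * q == 0 then 2 else if p * q == 1 then 3 else if p * q == 2 then 4 else 6.

Definition finite_rank2 : seq (int * int) :=
  [:: (0, 0); (-1, -1); (-1, -2); (-2, -1); (-1, -3); (-3, -1)].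

(* [(s_t s_t')^m = 1], checked on the basis vectors, whose [(v_t, v_t')] lie in [{0,1}^2]. *)
Definition rank2_braid (p q : int) :=
  let m := coxeter_m p q in
  all (fun v : int * int =>
         rank2_coeffs p q (alt_word true m.+1) v.1 v.2
         == rank2_coeffs p q (alt_word false m.-1) v.1 v.2)
    [:: (0, 0); (0, 1); (1, 0); (1, 1)].

(* [... s_t s_t' alpha_t] (k letters) is a positive root for [k < m];
   [alpha_t] has coordinates [(2, q)]. *)
Definition rank2_positive (p q : int) :=
  all (fun k => let PQ := rank2_coeffs p q (rev (alt_word false k)) 2 q in
         [&& 0 <= 1 + PQ.1, 0 <= PQ.2 & (1 + PQ.1 != 0) || (PQ.2 != 0)])
    (iota 0 (coxeter_m p q)).

Lemma finite_rank2_checks :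
  all (fun pq => rank2_braid pq.1 pq.2 && rank2_positive pq.1 pq.2) finite_rank2.
Proof. by vm_compute. Qed.

Lemma finite_rank2P (p q : int) : p <= 0 -> q <= 0 -> (p == 0) = (q == 0) ->
  p * q < 4 -> (p, q) \in finite_rank2.
Proof.
move=> p_le0 q_le0 pq0 pq_lt4.
have p_ge : -3 <= p.
  by case: (eqVneq q 0) => [q0|nq0]; [move: pq0; rewrite q0 eqxx => /eqP -> | nia].
have q_ge : -3 <= q.
  case: (eqVneq p 0) => [p0|np0]; last by nia.
  by move: pq0; rewrite p0 eqxx; move/esym/eqP->.
move/eqP: pq0; move: pq_lt4.
have : [|| p == 0, p == -1, p == -2 | p == -3] by lia.
have : [|| q == 0, q == -1, q == -2 | q == -3] by lia.
by case/or4P=> /eqP->; case/or4P=> /eqP->.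
Qed.

Section DihedralWords.
Variables (n : nat) (A : 'M[int]_n).
Hypothesis A_diag : forall i, A i i = 2.
Variables (t t' : 'I_n).

Definition letter (b : bool) := if b then t else t'.

Let p := A t' t.
Let q := A t t'.

Lemma word_letter_mul_state B (lam : 'cV[int]_n) vt vt' P Q :
  foldr (rank2_step p q) (lam t 0, lam t' 0, 0, 0) B = (vt, vt', P, Q) ->
  [/\ word_mx A (map letter B) *m lam = lam + P *: alpha A t + Q *: alpha A t',
      (word_mx A (map letter B) *m lam) t 0 = vt &
      (word_mx A (map letter B) *m lam) t' 0 = vt'].
Proof.
elim: B vt vt' P Q => [|b B IH] vt vt' P Q /=.
  by case=> <- <- <- <-; rewrite mul1mx !scale0r !addr0.
case E: foldr => [[[vt1 vt1'] P1] Q1]; have [E1 E2 E3] := IH _ _ _ _ E.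
rewrite /rank2_step /letter -mulmxA; case: b => -[<- <- <- <-]; split.
- by rewrite sref_vec E2 E1; apply/matrixP => j k; rewrite !mxE; ring.
- by rewrite sref_mulE E2 A_diag; ring.
- by rewrite sref_mulE E2 E3; ring.
- by rewrite sref_vec E3 E1; apply/matrixP => j k; rewrite !mxE; ring.
- by rewrite sref_mulE E2 E3; ring.
- by rewrite sref_mulE E3 A_diag; ring.
Qed.

Lemma word_letter_mul B (lam : 'cV[int]_n) :
  let PQ := rank2_coeffs p q B (lam t 0) (lam t' 0) in
  word_mx A (map letter B) *m lam = lam + PQ.1 *: alpha A t + PQ.2 *: alpha A t'.
Proof.
rewrite /rank2_coeffs; case E: foldr => [[[vt vt'] P] Q] /=.
by have [-> _ _] := word_letter_mul_state E.
Qed.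

Hypothesis pq_finite : (p, q) \in finite_rank2.

Lemma dihedral_braid :
  word_mx A (map letter (alt_word true (coxeter_m p q).+1)) =
  word_mx A (map letter (alt_word false (coxeter_m p q).-1)).
Proof.
apply/matrixP => j k.
have col_k (M : 'M[int]_n) : M j k = (M *m (delta_mx k 0 : 'cV_n)) j 0.
  by rewrite -colE mxE.
rewrite !col_k !word_letter_mul; set e := (delta_mx k 0 : 'cV_n).
have /andP[braid _] := allP finite_rank2_checks _ pq_finite.
have : (e t 0, e t' 0) \in [:: (0, 0); (0, 1); (1, 0); (1, 1)].
  by rewrite !mxE; case: (t == k); case: (t' == k).
by move/(allP braid)/eqP => ->.
Qed.

Lemma dihedral_alpha_pos k : (k < coxeter_m p q)%N ->
  exists a b : int, [/\ 0 <= a, 0 <= b, (a != 0) || (b != 0) &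
    word_mx A (map letter (rev (alt_word false k))) *m alpha A t
      = a *: alpha A t + b *: alpha A t'].
Proof.
move=> lt_k_m; rewrite word_letter_mul !mxE A_diag -/q.
set PQ := rank2_coeffs _ _ _ _ _.
have /andP[_ /allP /(_ k)] := allP finite_rank2_checks _ pq_finite.
rewrite mem_iota lt_k_m => /(_ isT) /and3P[a_ge0 b_ge0 ab_neq0].
by exists (1 + PQ.1), PQ.2; rewrite scalerDl scale1r.
Qed.

Lemma size_alt_word b k : size (alt_word b k) = k.
Proof. by elim: k b => [|k IH] b //=; rewrite IH. Qed.

Lemma take_alt_word b j k : take j (alt_word b k) = alt_word b (minn j k).
Proof. by elim: k j b => [|k IH] [|j] b //=; rewrite IH minnSS. Qed.

Lemma alternating_word b L : all (pred2 t t') L ->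
  path (fun a c => a != c) (letter b) L -> L = map letter (alt_word (~~ b) (size L)).
Proof.
elim: L b => [|u L IH] b //= /andP[tu tL] /andP[bu uL].
have eu : u = letter (~~ b).
  by move: bu; case/orP: tu => /eqP->; case: b; rewrite /letter ?eqxx.
by rewrite eu in uL *; rewrite {1}(IH (~~ b)) ?negbK.
Qed.

Lemma all_letter B : all (pred2 t t') (map letter B).
Proof. by rewrite all_map; apply/allP => -[] _ /=; rewrite eqxx ?orbT. Qed.

Lemma dihedral_reduced_pos U : reduced_in A (pred2 t t') (rcons U t) ->
  exists a b : int, [/\ 0 <= a, 0 <= b, (a != 0) || (b != 0) &
    word_mx A U *m alpha A t = a *: alpha A t + b *: alpha A t'].
Proof.
move=> redUt; have := reduced_in_rev A_diag redUt; rewrite rev_rcons => red_tU.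
have alt_U : rev U = map letter (alt_word false (size U)).
  rewrite -(size_rev U); apply: (@alternating_word true); first by case: red_tU => /andP[].
  exact: reduced_in_path red_tU.
suff lt_U_m : (size U < coxeter_m p q)%N.
  by rewrite -[U]revK alt_U -map_rev; apply: dihedral_alpha_pos.
rewrite ltnNge; apply/negP => le_m_U; set m := coxeter_m p q in le_m_U.
have : reduced_in A (pred2 t t') (map letter (alt_word true (size U).+1)).
  by rewrite /= -alt_U.
rewrite -(cat_take_drop m.+1 (map letter _)) => /reduced_in_catl.
rewrite -map_take take_alt_word (minn_idPl _) ?ltnS // => -[_].
move/(_ _ (all_letter (alt_word false m.-1))); rewrite -dihedral_braid.
rewrite !size_map !size_alt_word => /(_ erefl).
by rewrite /m /coxeter_m; do !case: ifP.
Qed.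

End DihedralWords.

Section Positivity.
Variables (n : nat) (A : 'M[int]_n).
Hypothesis A_cartan : finite_cartan A.
Let A_diag := cartan_diag A_cartan.

Definition positive (g : 'cV[int]_n) :=
  exists c : 'cV[int]_n, [/\ forall j, 0 <= c j 0, c != 0 & g = A^T *m c].

Definition negative (g : 'cV[int]_n) := positive (- g).

Lemma positive_alpha i : positive (alpha A i).
Proof.
exists (delta_mx i 0); rewrite -alphaE; split=> //.
  by move=> j; rewrite mxE; case: (_ && _).
by apply/cV0Pn; exists i; rewrite mxE !eqxx.
Qed.

Lemma positive_comb g1 g2 (a b : int) : positive g1 -> positive g2 ->
  0 <= a -> 0 <= b -> (a != 0) || (b != 0) -> positive (a *: g1 + b *: g2).
Proof.
move=> [c1 [c1_ge0 /cV0Pn[j1 c1j1] ->]] [c2 [c2_ge0 /cV0Pn[j2 c2j2] ->]] a_ge0 b_ge0 ab.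
exists (a *: c1 + b *: c2); rewrite mulmxDr !scalemxAr; split=> //.
  by move=> j; rewrite !mxE addr_ge0 ?mulr_ge0.
have gt0 (z : int) : 0 <= z -> z != 0 -> 0 < z by rewrite lt_def => -> ->.
apply/cV0Pn; case/orP: ab => [a0|b0]; [exists j1 | exists j2]; rewrite !mxE gt_eqF //.
  by apply: ltr_wpDr; rewrite ?mulr_ge0 ?mulr_gt0 ?gt0.
by apply: ltr_wpDl; rewrite ?mulr_ge0 ?mulr_gt0 ?gt0.
Qed.

Lemma positive_not_negative g : positive g -> ~ negative g.
Proof.
move=> [c1 [c1_ge0 /cV0Pn[j c1j] E1]] [c2 [c2_ge0 _ E2]].
have /(simple_roots_free A_cartan) : A^T *m (c1 + c2) = 0 by rewrite mulmxDr -E1 -E2 subrr.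
move/matrixP/(_ j 0)/eqP; rewrite !mxE paddr_eq0 // => /andP[/eqP c1j0 _].
by rewrite c1j0 eqxx in c1j.
Qed.

Lemma cartan_pair_finite s s' : s != s' -> (A s' s, A s s') \in finite_rank2.
Proof.
move=> ss'; case: A_cartan => _ A_le0 A_sym _.
apply: finite_rank2P; [apply: A_le0; rewrite eq_sym // | exact: A_le0 | exact: A_sym |].
exact: cartan_pair_lt4.
Qed.

Definition pair_factorization (s s' : 'I_n) (K V U : seq 'I_n) :=
  [/\ reduced A V, reduced_in A (pred2 s s') U,
      word_mx A V *m word_mx A U = word_mx A K & (size V + size U = size K)%N].

Lemma pair_factorization_shorten s s' K V U t : reduced A K ->
  pair_factorization s s' K V U -> pred2 s s' t -> ~ reduced A (rcons V t) ->
  exists V' U', pair_factorization s s' K V' U' /\ (size V' < size V)%N.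
Proof.
move=> /reducedP minK [_ [pU _] EK sK] st /(not_reduced_rcons A_diag)[V' [redV' EV' ltV']].
have EK' : word_mx A (V' ++ t :: U) = word_mx A K by rewrite word_mx_cat /= mulmxA EV'.
have sK' : (size V' + size (t :: U) = size K)%N.
  by apply/eqP; rewrite eqn_leq -size_cat minK // size_cat /= addnS -sK ltn_add2r ltV'.
exists V', (t :: U); split=> //; split=> //; last by rewrite -word_mx_cat.
split=> [|U2 _ EU2]; first by rewrite /= pU andbT.
rewrite -(leq_add2l (size V')) sK' -size_cat minK //.
by rewrite word_mx_cat EU2 -word_mx_cat.
Qed.

Lemma pair_factorization_rcons s s' K V U : reduced A (rcons K s) ->
  pair_factorization s s' K V U -> reduced_in A (pred2 s s') (rcons U s).
Proof.
move=> /reducedP minKs [_ [pU _] EK sK]; split; first by rewrite all_rcons /= eqxx.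
move=> U2 _ EU2; rewrite -(leq_add2l (size V)) -size_cat.
have := minKs (V ++ U2); rewrite word_mx_cat EU2 !word_mx_rcons mulmxA EK size_rcons.
by rewrite !size_cat size_rcons addnS sK; apply.
Qed.

(* Induct on [l(w)], writing
   [w = v u] with [u] in the dihedral subgroup generated by [s] and the last letter [s']
   of [w], and [v] as short as possible: then [vs, vs' > v], and [u alpha_s] is a
   nonnegative combination of [alpha_s], [alpha_s'] by the rank 2 computation. *)
Theorem reduced_rcons_positive K s : reduced A K -> reduced A (rcons K s) ->
  positive (word_mx A K *m alpha A s).
Proof.
move sK: (size K) => N; elim/ltn_ind: N K s sK => N IH K s sK redK redKs.
case/lastP: K sK redK redKs => [|K' s'] sK redK redKs.
  by rewrite mul1mx; apply: positive_alpha.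
have ss' : s != s'.
  apply/eqP => ss'; move/reducedP: redKs => /(_ K'); rewrite !word_mx_rcons ss'.
  by rewrite -mulmxA srefK // mulmx1 !size_rcons => /(_ erefl); rewrite ltnNge leqnSn.
have fact0 : pair_factorization s s' (rcons K' s') K' [:: s'].
  split; rewrite ?size_rcons ?addn1 //=; last by rewrite mulmx1 word_mx_rcons.
    by apply: (@reduced_in_catl _ A _ K' [:: s']); rewrite cats1.
  by apply: (reduced_in_letter A_diag); rewrite /= eqxx orbT.
pose P m := exists V U, size V = m /\ pair_factorization s s' (rcons K' s') V U.
have [m [[V [U [<- fVU]]] minV]] :=
  @classic_ex_min P _ (ex_intro _ K' (ex_intro _ _ (conj erefl fact0))).
have le_V_K' : (size V <= size K')%N.
  by rewrite leqNgt; apply/negP => /minV; apply; exists K', [:: s'].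
have posV t : pred2 s s' t -> positive (word_mx A V *m alpha A t).
  move=> st; apply: (IH (size V)) => //; first by rewrite -sK size_rcons ltnS.
    by case: fVU.
  apply: NNPP => /(pair_factorization_shorten redK fVU st)[V' [U' [fVU' ltV']]].
  by apply: (minV _ ltV'); exists V', U'.
have [a [b [a0 b0 ab EU]]] :=
  dihedral_reduced_pos A_diag (cartan_pair_finite ss') (pair_factorization_rcons redKs fVU).
case: fVU => _ _ <- _; rewrite -mulmxA EU mulmxDr -!scalemxAr.
by apply: positive_comb => //; apply: posV; rewrite /= eqxx ?orbT.
Qed.

End Positivity.

Section Roots.
Variables (n : nat) (A : 'M[int]_n).
Hypothesis A_cartan : finite_cartan A.
Let A_diag := cartan_diag A_cartan.

Definition is_root (g : 'cV[int]_n) := exists K i, g = word_mx A K *m alpha A i.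

Lemma is_root_word K g : is_root g -> is_root (word_mx A K *m g).
Proof. by move=> [J [i ->]]; exists (K ++ J), i; rewrite word_mx_cat mulmxA. Qed.

Lemma is_root_alpha i : is_root (alpha A i).
Proof. by exists [::], i; rewrite mul1mx. Qed.

Lemma root_lattice g : is_root g -> exists c, g = A^T *m c.
Proof.
move=> [K [i ->]]; elim: K => [|j K [c Ec]] /=.
  by exists (delta_mx i 0); rewrite mul1mx alphaE.
exists (c - (A^T *m c) j 0 *: delta_mx j 0).
by rewrite -mulmxA Ec sref_vec alphaE mulmxBr scalemxAr.
Qed.

Lemma root_positive_or_negative g : is_root g -> positive A g \/ negative A g.
Proof.
move=> [K [i ->]]; have [V [redV <- _]] := exists_reduced A K.
case: (classic (reduced A (rcons V i))) => [redVi|].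
  by left; apply: reduced_rcons_positive.
move/(not_reduced_rcons A_diag) => [V' [redV' EV' ltV']]; right.
rewrite /negative -EV' -mulmxA sref_alpha // mulmxN opprK.
apply: reduced_rcons_positive => //; apply/reducedP => J EJ.
by rewrite size_rcons (leq_trans ltV') // (reducedP A V).1 // EJ word_mx_rcons.
Qed.

Lemma root_scaled_alpha i (k : int) : is_root (k *: alpha A i) -> 0 < k -> k = 1.
Proof.
move=> [K [m Em]] k_gt0; have [c Ec] := root_lattice (is_root_word (rev K) (is_root_alpha i)).
have : A^T *m (delta_mx m 0 - k *: c) = 0.
  rewrite mulmxBr -alphaE -scalemxAr -Ec scalemxAr Em mulmxA word_mx_revK //.
  by rewrite mul1mx subrr.
move/(simple_roots_free A_cartan)/matrixP/(_ m 0)/eqP.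
rewrite !mxE !eqxx subr_eq0 /=; move=> /eqP/esym kc1.
have c_gt0 : 0 < c m 0 by rewrite -(pmulr_rgt0 _ k_gt0) kc1.
move: (c m 0 : int) kc1 c_gt0 => c_m; nia.
Qed.

Lemma sref_positive_negative i mu :
  is_root mu -> positive A mu -> negative A (sref A i *m mu) -> mu = alpha A i.
Proof.
move=> root_mu [c [c_ge0 c_neq0 Ec]] [c' [c'_ge0 _ Ec']].
have /(simple_roots_free A_cartan) E0 : A^T *m (c' + c - mu i 0 *: delta_mx i 0) = 0.
  by rewrite mulmxBr mulmxDr -Ec' -Ec -scalemxAr -alphaE sref_vec opprB subrK subrr.
have Ec_i : c = c i 0 *: delta_mx i 0.
  apply/matrixP => j k; rewrite (ord1 k) !mxE.
  case: (eqVneq j i) => [->|ji]; first by rewrite eqxx mulr1.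
  move/matrixP/(_ j 0): E0; rewrite !mxE (negbTE ji) /= !mulr0 subr0.
  by have := c_ge0 j; have := c'_ge0 j; move: (c j 0 : int) (c' j 0 : int); lia.
have Emu : mu = c i 0 *: alpha A i by rewrite Ec {1}Ec_i -scalemxAr -alphaE.
have c_i_gt0 : 0 < c i 0.
  rewrite lt_def c_ge0 andbT; apply: contraNneq c_neq0 => c_i0.
  by rewrite Ec_i c_i0 scale0r.
by rewrite Emu (@root_scaled_alpha i (c i 0)) ?scale1r // -Emu.
Qed.

Lemma betas_rcons K i :
  betas A (rcons K i) = rcons (betas A K) (word_mx A K *m alpha A i).
Proof. by elim: K => [|j K IH] /=; rewrite ?mul1mx // IH map_rcons mulmxA. Qed.

Definition inversion (K : seq 'I_n) (g : 'cV[int]_n) :=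
  [/\ is_root g, positive A g & negative A (word_mx A (rev K) *m g)].

Lemma inversion_word_mx K J g :
  word_mx A K = word_mx A J -> inversion K g -> inversion J g.
Proof. by move=> EKJ [rg pg ng]; split=> //; rewrite -(word_mx_rev A_diag EKJ). Qed.

Lemma inversion_betas K g : inversion K g -> g \in betas A K.
Proof.
elim/last_ind: K g => [|K i IH] g [rg pg].
  by rewrite /= mul1mx => /(positive_not_negative A_cartan pg).
rewrite betas_rcons mem_rcons inE rev_rcons /= -mulmxA => ng.
have rKg : is_root (word_mx A (rev K) *m g) by apply: is_root_word.
case: (root_positive_or_negative rKg) => [pKg|nKg]; last by rewrite IH ?orbT.
by rewrite -(sref_positive_negative rKg pKg ng) mulmxA word_mxK // mul1mx eqxx.
Qed.

Lemma betas_inversion K g : reduced A K -> g \in betas A K -> inversion K g.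
Proof.
elim/last_ind: K g => [|K i IH] g redKi //.
have redK : reduced A K by apply: (@reduced_in_catl _ A _ K [:: i]); rewrite cats1.
rewrite betas_rcons mem_rcons inE => /orP[/eqP->|gK].
  split; [exact: is_root_word (is_root_alpha i) | exact: reduced_rcons_positive |].
  rewrite /negative rev_rcons /= -mulmxA (mulmxA (word_mx A (rev K))) word_mx_revK //.
  by rewrite mul1mx sref_alpha // opprK; apply: positive_alpha.
have [rg pg ng] := IH g redK gK; split=> //; rewrite rev_rcons /= -mulmxA.
set mu := word_mx A (rev K) *m g in ng *.
have rimu : is_root (sref A i *m mu) by rewrite mulmxA; apply: (is_root_word (i :: rev K)).
case: (root_positive_or_negative rimu) => // pimu; exfalso.
have : negative A (sref A i *m (sref A i *m mu)) by rewrite mulmxA srefK // mul1mx.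
move/(sref_positive_negative rimu pimu) => imu.
have Eg : g = - (word_mx A K *m alpha A i).
  by rewrite -mulmxN -(sref_alpha A_diag) -imu (mulmxA (sref A i)) srefK // mul1mx
    /mu mulmxA word_mxK // mul1mx.
apply: (positive_not_negative A_cartan pg); rewrite /negative Eg opprK.
exact: reduced_rcons_positive.
Qed.

Lemma betas_uniq K : reduced A K -> uniq (betas A K).
Proof.
elim/last_ind: K => [|K i IH] // redKi.
have redK : reduced A K by apply: (@reduced_in_catl _ A _ K [:: i]); rewrite cats1.
rewrite betas_rcons rcons_uniq IH // andbT; apply/negP => /(betas_inversion redK)[_ _].
by rewrite mulmxA word_mx_revK // mul1mx; apply: positive_not_negative (positive_alpha _ _).
Qed.

Lemma perm_eq_betas I J : reduced A I -> reduced A J ->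
  word_mx A I = word_mx A J -> perm_eq (betas A I) (betas A J).
Proof.
move=> redI redJ EIJ; apply: uniq_perm; rewrite ?betas_uniq // => g.
apply/idP/idP => [/(betas_inversion redI)|/(betas_inversion redJ)] inv_g.
  exact/inversion_betas/(inversion_word_mx EIJ).
exact/inversion_betas/(inversion_word_mx (esym EIJ)).
Qed.

End Roots.

Section TwistedGroupAlgebra.
Variables (Q : comUnitRingType) (n : nat).

Lemma qw_coef_cat (a b : QW Q n) w : qw_coef (a ++ b) w = qw_coef a w + qw_coef b w.
Proof. by rewrite /qw_coef big_cat. Qed.

Lemma qw_coef_delta (v w : 'M[int]_n) : qw_coef (qw_delta Q v) w = (v == w)%:R.
Proof. by rewrite /qw_coef big_cons big_nil; case: eqP; rewrite ?addr0. Qed.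

Lemma qw_coef_scale c (a : QW Q n) w : qw_coef (qw_scale c a) w = c * qw_coef a w.
Proof. by rewrite /qw_coef /qw_scale big_map mulr_sumr. Qed.

End TwistedGroupAlgebra.

Section RootPolynomials.
Variables (Q : comUnitRingType) (n : nat) (A : 'M[int]_n).
Variable act : 'M[int]_n -> {rmorphism Q -> Q}.
Variable x : 'cV[int]_n -> Q.
Hypothesis A_diag : forall i, A i i = 2.
Hypothesis act1 : forall q, act 1%:M q = q.
Hypothesis actM : forall u v, inW A u -> inW A v -> forall q, act (u *m v) q = act u (act v q).
Hypothesis act_x : forall w lam, inW A w -> act w (x lam) = x (w *m lam).
Hypothesis x_unit : forall w i, inW A w -> x (w *m alpha A i) \is a GRing.unit.

(* [delta_g ev(b)], except that the variables [y_mu] are evaluated to [x_{-mu}]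
   without being moved by [g]. *)
Definition ev_at (g : 'M[int]_n) (b : QWL Q n) : QW Q n :=
  [seq ((\prod_(mu <- u.1) x (- mu)) * act g u.2.1, g *m u.2.2) | u <- b].

Lemma ev_ev_at1 b : ev x b = ev_at 1%:M b.
Proof. by apply: eq_map => u /=; rewrite act1 mul1mx. Qed.

Lemma ev_at_mul_one (g : 'M[int]_n) b : ev_at g (qwl_mul act (qwl_one Q n) b) = ev_at g b.
Proof.
rewrite /qwl_mul /= cats0 /ev_at -map_comp; apply: eq_map => u /=.
by rewrite act1 mul1r mul1mx.
Qed.

Lemma ev_at_mul_y g mu c1 h1 c2 h2 b : inW A g -> inW A h1 -> inW A h2 ->
  ev_at g (qwl_mul act (qwl_y mu [:: (c1, h1); (c2, h2)]) b) =
  qw_scale (x (- mu) * act g c1) (ev_at (g *m h1) b) ++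
  qw_scale (x (- mu) * act g c2) (ev_at (g *m h2) b).
Proof.
move=> Wg W1 W2; rewrite /qwl_mul /qwl_y /= cats0 /ev_at /qw_scale map_cat -!map_comp.
by congr (_ ++ _); apply: eq_map => u /=; rewrite big_cons rmorphM actM // mulmxA;
  congr (_, _); ring.
Qed.

Lemma qw_coef_ev_at_h g mu c1 h1 c2 h2 b w : inW A g -> inW A h1 -> inW A h2 ->
  qw_coef (ev_at g (qwl_mul act (qwl_one Q n ++ qwl_y mu [:: (c1, h1); (c2, h2)]) b)) w =
  qw_coef (ev_at g b) w + x (- mu) * act g c1 * qw_coef (ev_at (g *m h1) b) w
   + x (- mu) * act g c2 * qw_coef (ev_at (g *m h2) b) w.
Proof.
move=> Wg W1 W2; rewrite {1}/qwl_mul allpairs_cat /ev_at map_cat -!/(ev_at _ _).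
by rewrite -!/(qwl_mul _ _ _) ev_at_mul_one ev_at_mul_y // !qw_coef_cat !qw_coef_scale addrA.
Qed.

Definition rootpolyX_at (g : 'M[int]_n) (I : seq 'I_n) : QWL Q n :=
  foldr (fun p acc => qwl_mul act (hX A x p.1 p.2) acc) (qwl_one Q n)
    (zip I [seq g *m b | b : 'cV[int]_n <- betas A I]).

Definition rootpolyY_at (g : 'M[int]_n) (I : seq 'I_n) : QWL Q n :=
  foldr (fun p acc => qwl_mul act (hY A x p.1 p.2) acc) (qwl_one Q n)
    (zip I [seq g *m b | b : 'cV[int]_n <- betas A I]).

Definition thetaI_at (g : 'M[int]_n) (I : seq 'I_n) : Q :=
  \prod_(b <- betas A I) theta x (g *m b).

Lemma map_mulmx_betas_cons (g : 'M[int]_n) i I :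
  [seq g *m b | b : 'cV[int]_n <- betas A (i :: I)]
  = g *m alpha A i :: [seq g *m sref A i *m b | b : 'cV[int]_n <- betas A I].
Proof. by rewrite /= -map_comp; congr (_ :: _); apply: eq_map => b /=; rewrite mulmxA. Qed.

Lemma map_mul1mx (l : seq 'cV[int]_n) : [seq 1%:M *m b | b : 'cV[int]_n <- l] = l.
Proof. by rewrite (eq_map (@mul1mx _ _ _)) map_id. Qed.

Lemma rootpolyX_at_cons (g : 'M[int]_n) i I : rootpolyX_at g (i :: I)
  = qwl_mul act (hX A x i (g *m alpha A i)) (rootpolyX_at (g *m sref A i) I).
Proof. by rewrite /rootpolyX_at map_mulmx_betas_cons. Qed.

Lemma rootpolyY_at_cons (g : 'M[int]_n) i I : rootpolyY_at g (i :: I)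
  = qwl_mul act (hY A x i (g *m alpha A i)) (rootpolyY_at (g *m sref A i) I).
Proof. by rewrite /rootpolyY_at map_mulmx_betas_cons. Qed.

Lemma rootpolyX_at1 I : rootpolyX_at 1%:M I = rootpolyX A act x I.
Proof. by rewrite /rootpolyX_at map_mul1mx. Qed.

Lemma rootpolyY_at1 I : rootpolyY_at 1%:M I = rootpolyY A act x I.
Proof. by rewrite /rootpolyY_at map_mul1mx. Qed.

Lemma thetaI_at1 I : thetaI_at 1%:M I = thetaI A x I.
Proof. by apply: eq_bigr => b _; rewrite mul1mx. Qed.

Lemma thetaI_at_cons (g : 'M[int]_n) i I :
  thetaI_at g (i :: I) = theta x (g *m alpha A i) * thetaI_at (g *m sref A i) I.
Proof.
rewrite /thetaI_at /= big_cons big_map; congr (_ * _).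
by apply: eq_bigr => b _; rewrite mulmxA.
Qed.

Lemma x_alpha_unit i : x (alpha A i) \is a GRing.unit.
Proof. by have := x_unit i (inW1 A); rewrite mul1mx. Qed.

Lemma x_Nalpha_unit i : x (- alpha A i) \is a GRing.unit.
Proof. by have := x_unit i (inW_sref A i); rewrite sref_alpha. Qed.

Lemma ev_at_rootpolyX I (g : 'M[int]_n) : inW A g ->
  qw_eq (ev_at g (rootpolyX_at g I)) (qw_delta Q (g *m word_mx A I)).
Proof.
elim: I g => [|i I IH] g Wg w.
  by rewrite /rootpolyX_at /= big_nil rmorph1 mulr1 mulmx1.
have Wgi : inW A (g *m sref A i) by apply: inW_mul => //; apply: inW_sref.
rewrite rootpolyX_at_cons /hX /Xop.
have [Wi W1] := (inW_sref A i, inW1 A).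
rewrite qw_coef_ev_at_h // mulmx1 IH // mulmxA opprK rmorphN.
rewrite rmorphV ?x_alpha_unit // act_x // mulrN mulrV ?x_unit //; ring.
Qed.

Lemma ev_at_rootpolyY I (g : 'M[int]_n) : inW A g ->
  qw_eq (ev_at g (rootpolyY_at g I))
        (qw_scale (thetaI_at g I) (qw_delta Q (g *m word_mx A I))).
Proof.
elim: I g => [|i I IH] g Wg w.
  rewrite /rootpolyY_at qw_coef_scale /= big_nil rmorph1 mulr1 mulmx1.
  by rewrite /thetaI_at big_nil mul1r.
have Wgi : inW A (g *m sref A i) by apply: inW_mul => //; apply: inW_sref.
have x_Ngalpha : x (- (g *m alpha A i)) \is a GRing.unit.
  by have := x_unit i Wgi; rewrite -mulmxA sref_alpha // mulmxN.
rewrite qw_coef_scale rootpolyY_at_cons /hY /Yop [qw_scale (-1) _]/qw_scale /=.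
have [Wi W1] := (inW_sref A i, inW1 A).
rewrite qw_coef_ev_at_h // mulmx1 IH // !qw_coef_scale !qw_coef_delta mulmxA.
rewrite !mulNr !mul1r !rmorphN !rmorphV ?x_alpha_unit ?x_Nalpha_unit // !act_x // mulmxN.
by rewrite thetaI_at_cons /theta mulrN (mulrV x_Ngalpha); ring.
Qed.

End RootPolynomials.

Theorem lemma3p2 (Q : comUnitRingType) (n : nat) (A : 'M[int]_n)
    (act : 'M[int]_n -> {rmorphism Q -> Q}) (x : 'cV[int]_n -> Q) :
  finite_cartan A ->
  (forall q, act 1%:M q = q) ->
  (forall u v, inW A u -> inW A v -> forall q, act (u *m v) q = act u (act v q)) ->
  (forall w lam, inW A w -> act w (x lam) = x (w *m lam)) ->
  (forall w i, inW A w -> x (w *m alpha A i) \is a GRing.unit) ->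
  forall (w : 'M[int]_n) (I : seq 'I_n), reduced_word A w I ->
    [/\ qw_eq (ev x (rootpolyX A act x I)) (qw_delta Q w),
        qw_eq (ev x (rootpolyY A act x I)) (qw_scale (thetaI A x I) (qw_delta Q w)) &
        forall J : seq 'I_n, reduced_word A w J -> thetaI A x J = thetaI A x I].
Proof.
move=> A_cartan act1 actM act_x x_unit w I redI; have [EI _] := redI.
have [A_diag W1] := (cartan_diag A_cartan, inW1 A).
split=> [v|v|J redJ].
- rewrite (ev_ev_at1 x act1) -rootpolyX_at1 ev_at_rootpolyX //.
  by rewrite mul1mx EI.
- rewrite (ev_ev_at1 x act1) -rootpolyY_at1 ev_at_rootpolyY //.
  by rewrite mul1mx EI thetaI_at1.
- have [EJ _] := redJ; apply/perm_big/perm_eq_betas; rewrite ?EJ //.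
  + exact: reduced_word_reduced redJ.
  + exact: reduced_word_reduced redI.
Qed.
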